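(* Let $N\ge 2$ and consider the interconnected uncertain system with state $x=(x_{11},x_{12},x_{21},x_{22},\dots,x_{N1},x_{N2})\in\mathbb{R}^{2N}$, known input $u\in\mathbb{R}^m$, unknown input $w\in\mathbb{R}^N$ and measured output $y=(x_{11},x_{21},\dots,x_{N1})^\top\in\mathbb{R}^N$, given for $i=1,\dots,N$ by \[ \dot x_{i1}=f_{i1}(y,u,x_{12},\dots,x_{(i-1)2})+g_i(y,u,t)\,x_{i2},\qquad \dot x_{i2}=f_{i2}(x,u)+\delta_i(x,u,w,t), \] where $f_{11}=f_{11}(y,u)$ (no dependence on any $x_{j2}$), the $f_{i1}$ are known continuous functions, the $f_{i2}$ are known, possibly discontinuous or multivalued functions, the $\delta_i$ are unknown uncertainty terms, and the $g_i$ are known continuous functions satisfying $0<g_{i,m}\le g_i(y,u,t)\le g_{i,M}$ for some constants $g_{i,m},g_{i,M}$. Assume the system has solutions in the sense of Filippov. Then this system is globally strongly observable.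
   Context: A system with known input $u$, unknown input (here the uncertainty terms $\delta_i$), and output $y$ is called strongly observable if the state $x$ can be recovered from the known input $u$ and the measured output $y$ together with their time derivatives, regardless of the unknown input; it is globally strongly observable if this holds on the whole state space, i.e. the map $(x,u)\mapsto(y,\dot y,\dots)$ obtained from the output and its derivatives does not depend on the unknown input and is globally invertible in $x$ for every $u\in\mathbb{R}^m$. *)

From HB Require Import structures.
From mathcomp Require Import all_boot all_order all_algebra.
From mathcomp Require Import all_classical all_reals topology normedtype.
Set Implicit Arguments. Unset Strict Implicit. Unset Printing Implicit Defensive.
Import Order.TTheory GRing.Theory Num.Theory.
Import numFieldNormedType.Exports.
Local Open Scope ring_scope.
Local Open Scope classical_set_scope.

(* The state x = (x_{11},x_{12},...,x_{N1},x_{N2}) is represented as the pair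
   (x1, x2) of row vectors with x1 0 i = x_{i1} and x2 0 i = x_{i2}. *)
Definition state (R : realType) (N : nat) := ('rV[R]_N * 'rV[R]_N)%type.

Definition output (R : realType) (N : nat) (x : state R N) : 'rV[R]_N := x.1.

Definition sys_field (R : realType) (N m : nat)
  (f1 : 'I_N -> 'rV[R]_N -> 'rV[R]_m -> 'rV[R]_N -> R)
  (g : 'I_N -> 'rV[R]_N -> 'rV[R]_m -> R -> R)
  (f2 : 'I_N -> state R N -> 'rV[R]_m -> set R)
  (delta : 'I_N -> state R N -> 'rV[R]_m -> 'rV[R]_N -> R -> R)
  (x : state R N) (u : 'rV[R]_m) (w : 'rV[R]_N) (t : R) : set (state R N) :=
  [set v : state R N | forall i : 'I_N,
      v.1 0 i = f1 i (output x) u x.2 + g i (output x) u t * x.2 0 i /\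
      exists a, f2 i x u a /\ v.2 0 i = a + delta i x u w t].

(* Global strong observability (with respect to the output y = x.1 and the
   unknown input given by the uncertainty terms delta together with w):
   the map (x,u,t) |-> (y, ydot), where ydot = d/dt (x.1) = v.1 for any
   admissible velocity v of the system, is the same whatever the unknown
   input (delta, w) is, and is injective in x for every known input u
   (and time t). *)
Definition globally_strongly_observable (R : realType) (N m : nat)
  (F : ((('I_N -> state R N -> 'rV[R]_m -> 'rV[R]_N -> R -> R) * 'rV[R]_N)%type) ->
       state R N -> 'rV[R]_m -> R -> set (state R N)) : Prop :=
  exists Phi : state R N -> 'rV[R]_m -> R -> ('rV[R]_N * 'rV[R]_N)%type,
    (forall d x u t v, F d x u t v -> (output x, output v) = Phi x u t) /\
    (forall (u : 'rV[R]_m) (t : R), injective (fun x => Phi x u t)).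

From HB Require Import structures.
From mathcomp Require Import all_boot all_order all_algebra.
From mathcomp Require Import all_classical all_reals topology normedtype.
Set Implicit Arguments. Unset Strict Implicit. Unset Printing Implicit Defensive.
Import Order.TTheory GRing.Theory Num.Theory.
Import numFieldNormedType.Exports.
Local Open Scope ring_scope.
Local Open Scope classical_set_scope.

(* The output derivative is ydot_i = f_{i1}(y, u, x_{12}, ..., x_{(i-1)2}) + g_i x_{i2},
   in which the uncertainty delta does not appear.  The map x2 |-> ydot is
   lower triangular with nonzero diagonal g_i, so x_{12}, x_{22}, ... are
   recovered from (y, ydot) one after the other. *)

Lemma row_eq_by_prefix (T : Type) (N : nat) (z z' : 'rV[T]_N) :
  (forall i : 'I_N, (forall j : 'I_N, (j < i)%N -> z 0 j = z' 0 j) ->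
     z 0 i = z' 0 i) ->
  z = z'.
Proof.
move=> step.
have below k : forall j : 'I_N, (j < k)%N -> z 0 j = z' 0 j.
  elim: k => [|k IHk] j // /[!ltnS] le_jk.
  by apply: step => l lt_lj; apply: IHk; exact: leq_trans lt_lj le_jk.
by apply/rowP => i; apply: (below i.+1).
Qed.

Lemma triangular_row_inj (K : fieldType) (N : nat)
    (F : 'I_N -> 'rV[K]_N -> K) (c : 'I_N -> K) :
  (forall (i : 'I_N) (z z' : 'rV[K]_N),
     (forall j : 'I_N, (j < i)%N -> z 0 j = z' 0 j) -> F i z = F i z') ->
  (forall i, c i != 0) ->
  injective (fun z : 'rV[K]_N => \row_i (F i z + c i * z 0 i)).
Proof.
move=> F_lower c_neq0 z z' /rowP eq_rows; apply: row_eq_by_prefix => i eq_below.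
have := eq_rows i; rewrite !mxE (F_lower i z z' eq_below) => /addrI.
exact: mulfI.
Qed.

Definition output_velocity (R : realType) (N m : nat)
    (f1 : 'I_N -> 'rV[R]_N -> 'rV[R]_m -> 'rV[R]_N -> R)
    (g : 'I_N -> 'rV[R]_N -> 'rV[R]_m -> R -> R)
    (x : state R N) (u : 'rV[R]_m) (t : R) : 'rV[R]_N :=
  \row_i (f1 i (output x) u x.2 + g i (output x) u t * x.2 0 i).

Lemma sys_field_output_velocity (R : realType) (N m : nat) f1 g f2
    (delta : 'I_N -> state R N -> 'rV[R]_m -> 'rV[R]_N -> R -> R)
    (x : state R N) u w t v :
  sys_field f1 g f2 delta x u w t v -> output v = output_velocity f1 g x u t.
Proof. by move=> field_v; apply/rowP => i; rewrite mxE; case: (field_v i). Qed.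

Lemma output_velocity_inj (R : realType) (N m : nat)
    (f1 : 'I_N -> 'rV[R]_N -> 'rV[R]_m -> 'rV[R]_N -> R)
    (g : 'I_N -> 'rV[R]_N -> 'rV[R]_m -> R -> R) (u : 'rV[R]_m) (t : R) :
  (forall (i : 'I_N) (y : 'rV[R]_N) (z z' : 'rV[R]_N),
     (forall j : 'I_N, (j < i)%N -> z 0 j = z' 0 j) -> f1 i y u z = f1 i y u z') ->
  (forall (i : 'I_N) (y : 'rV[R]_N), g i y u t != 0) ->
  injective (fun x : state R N => (output x, output_velocity f1 g x u t)).
Proof.
move=> f1_lower g_neq0 [y z] [y' z'] [/= <-] eq_vel; congr pair.
apply: (triangular_row_inj (F := fun i => f1 i y u) (c := fun i => g i y u t)).
- by move=> i; apply: f1_lower.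
- by move=> i; apply: g_neq0.
- exact: eq_vel.
Qed.

Theorem proposition1 (R : realType) (N m : nat) (hN : (2 <= N)%N)
  (f1 : 'I_N -> 'rV[R]_N -> 'rV[R]_m -> 'rV[R]_N -> R)
  (g : 'I_N -> 'rV[R]_N -> 'rV[R]_m -> R -> R)
  (f2 : 'I_N -> state R N -> 'rV[R]_m -> set R)
  (* f_{i1} depends on x2 only through x_{12},...,x_{(i-1)2} *)
  (hf1dep : forall (i : 'I_N) (y : 'rV[R]_N) (u : 'rV[R]_m) (z z' : 'rV[R]_N),
      (forall j : 'I_N, (j < i)%N -> z 0 j = z' 0 j) -> f1 i y u z = f1 i y u z')
  (hf1cont : forall i : 'I_N,
      continuous (fun p : ('rV[R]_N * 'rV[R]_m * 'rV[R]_N)%type =>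
                    f1 i p.1.1 p.1.2 p.2))
  (hgcont : forall i : 'I_N,
      continuous (fun p : ('rV[R]_N * 'rV[R]_m * R)%type => g i p.1.1 p.1.2 p.2))
  (hgbnd : forall i : 'I_N, exists gm gM : R,
      0 < gm /\ forall y u t, gm <= g i y u t <= gM) :
  globally_strongly_observable
    (fun d : (('I_N -> state R N -> 'rV[R]_m -> 'rV[R]_N -> R -> R) * 'rV[R]_N)%type =>
       fun x u t => sys_field f1 g f2 d.1 x u d.2 t).
Proof.
exists (fun x u t => (output x, output_velocity f1 g x u t)); split.
  by move=> d x u t v /sys_field_output_velocity ->.
move=> u t; apply: output_velocity_inj => [i y|i y]; first exact: hf1dep.
have [gm [gM [gm_gt0 g_bnd]]] := hgbnd i.
have /andP[gm_le _] := g_bnd y u t.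
by rewrite gt_eqF // (lt_le_trans gm_gt0 gm_le).
Qed.
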